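(* Let $X$ be a Banach space and $f_k:X\to\mathbb{R}\cup\{+\infty\}$ $(k\in\mathbb{N}\cup\{0\})$ proper convex functions such that $C:=\operatorname{dom}f_0\cap\{x: f_k(x)\le0\ \forall k\in\mathbb{N}\}\neq\emptyset$. Let $\bar x\in X$ be a solution of problem (P): minimize $f_0(x)$ subject to $f_k(x)\le 0$ $(k\in\mathbb{N})$, and suppose the Slater condition holds: there exists $x\in\operatorname{dom}f_0$ with $\sup_{k\in\mathbb{N}}f_k(x)<0$. Then: (i) There exists a solution $(\lambda_1,\lambda_2,\ldots)\in\ell^1_+$, $\lambda_\infty\in\mathbb{R}_+$ of (D), i.e., $f_0(\bar x)=\inf_{x\in X}\big(f_0(x)+\overline{\sum_{k\in\mathbb{N}}}\lambda_kf_k(x)+\lambda_\infty f_\infty(x)\big)$. Moreover, for any solution of (D), this infimum is attained at $\bar x$, and $\lambda_kf_k(\bar x)=0$ for all $k\in\mathbb{N}\cup\{\infty\}$. (ii) For any $m=0,1,\ldots$, there exists a solution $(\lambda_1,\lambda_2,\ldots)\in\ell^\infty_+$ of (D$_m$), i.e., $f_0(\bar x)=\inf_{x\in X}\big(f_0(x)+\sum_{k=1}^m\lambda_kf_k(x)+\sum_{k=m+1}^{\infty}\lambda_kf_k^+(x)\big)$. Moreover, for any solution of (D$_m$), this infimum is attained at $\bar x$, and $\lambda_kf_k(\bar x)=0$ for $k=1,\ldots,m$.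
   Context: Conventions: $0\cdot(+\infty)=+\infty$, $(+\infty)-(+\infty)=+\infty$. $\ell^1_+$, $\ell^\infty_+$: nonnegative sequences in $\ell^1$, $\ell^\infty$. $f_\infty(x):=\limsup_{k\to\infty}f_k(x)$, $f_k^+:=\max\{f_k,0\}$, and $\overline{\sum_{k\in\mathbb{N}}}\lambda_kf_k(x):=\limsup_{n\to\infty}\sum_{k=1}^n\lambda_kf_k(x)$. (D) is the problem $\sup_{\lambda\in\ell^1_+,\lambda_\infty\ge0}\inf_{x\in X}\big(f_0(x)+\overline{\sum_{k\in\mathbb{N}}}\lambda_kf_k(x)+\lambda_\infty f_\infty(x)\big)$; (D$_m$) is $\sup_{\lambda\in\ell^\infty_+}\inf_{x\in X}\big(f_0(x)+\sum_{k=1}^m\lambda_kf_k(x)+\sum_{k=m+1}^\infty\lambda_kf_k^+(x)\big)$ (first sum zero if $m=0$). A solution of a dual problem is a point attaining its supremum; a solution of (P) is a feasible point minimizing $f_0$ over the feasible set. *)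

From HB Require Import structures.
From mathcomp Require Import all_boot all_order all_algebra.
From mathcomp Require Import all_classical all_reals all_analysis.
Unset Printing Implicit Defensive.
Import Order.TTheory GRing.Theory Num.Theory.
Import numFieldNormedType.Exports.
Local Open Scope classical_set_scope.
Local Open Scope ring_scope.
Local Open Scope ereal_scope.

(* Indexing convention: the objective is [f0]; the constraint functions
   f_1, f_2, ... of the paper are [f 0], [f 1], ... (so [f k] is f_{k+1});
   multiplier sequences are indexed likewise ([lam k] is lambda_{k+1}). *)

(* product lambda * a with the convention 0 * (+oo) = +oo *)
Definition emulc {R : realType} (l : R) (a : \bar R) : \bar R :=
  if a == +oo then +oo else l%:E * a.

Definition proper_efun {R : realType} {X : Type} (g : X -> \bar R) : Prop :=
  (forall x, g x != -oo) /\ (exists x, g x < +oo).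

Definition convex_efun {R : realType} {X : lmodType R} (g : X -> \bar R) : Prop :=
  forall (x y : X) (t : R), (0 < t < 1)%R ->
    g (t *: x + (1 - t) *: y)%R <= t%:E * g x + (1 - t)%:E * g y.

Definition edom {R : realType} {X : Type} (g : X -> \bar R) : set X :=
  [set x | g x < +oo].

Definition feasible {R : realType} {X : Type} (f0 : X -> \bar R)
  (f : nat -> X -> \bar R) : set X :=
  [set x | f0 x < +oo /\ forall k, f k x <= 0].

Definition solutionP {R : realType} {X : Type} (f0 : X -> \bar R)
  (f : nat -> X -> \bar R) (xb : X) : Prop :=
  feasible f0 f xb /\ forall x, feasible f0 f x -> f0 xb <= f0 x.

Definition finf {R : realType} {X : Type} (f : nat -> X -> \bar R) (x : X) : \bar R :=
  limn_esup (fun k => f k x).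

Definition l1_plus {R : realType} (lam : nat -> R) : Prop :=
  (forall k, (0 <= lam k)%R) /\ \sum_(0 <= k <oo) (lam k)%:E < +oo.

Definition linf_plus {R : realType} (lam : nat -> R) : Prop :=
  (forall k, (0 <= lam k)%R) /\ exists M : R, forall k, (lam k <= M)%R.

(* Lagrangian of (D); additions use the convention (+oo) + (-oo) = +oo *)
Definition lagD {R : realType} {X : Type} (f0 : X -> \bar R)
  (f : nat -> X -> \bar R) (lam : nat -> R) (li : R) (x : X) : \bar R :=
  dual_adde
    (dual_adde (f0 x) (limn_esup (fun n => \sum_(0 <= k < n) emulc (lam k) (f k x))))
    (emulc li (finf f x)).

Definition dualD {R : realType} {X : Type} (f0 : X -> \bar R)
  (f : nat -> X -> \bar R) (lam : nat -> R) (li : R) : \bar R :=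
  ereal_inf (range (lagD f0 f lam li)).

Definition valD {R : realType} {X : Type} (f0 : X -> \bar R)
  (f : nat -> X -> \bar R) : \bar R :=
  ereal_sup [set v | exists lam li, [/\ l1_plus lam, (0 <= li)%R & v = dualD f0 f lam li]].

Definition solutionD {R : realType} {X : Type} (f0 : X -> \bar R)
  (f : nat -> X -> \bar R) (lam : nat -> R) (li : R) : Prop :=
  [/\ l1_plus lam, (0 <= li)%R & dualD f0 f lam li = valD f0 f].

Definition lagDm {R : realType} {X : Type} (m : nat) (f0 : X -> \bar R)
  (f : nat -> X -> \bar R) (lam : nat -> R) (x : X) : \bar R :=
  dual_adde
    (dual_adde (f0 x) (\sum_(0 <= k < m) emulc (lam k) (f k x)))
    (\sum_(m <= k <oo) emulc (lam k) (Order.max (f k x) 0)).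

Definition dualDm {R : realType} {X : Type} (m : nat) (f0 : X -> \bar R)
  (f : nat -> X -> \bar R) (lam : nat -> R) : \bar R :=
  ereal_inf (range (lagDm m f0 f lam)).

Definition valDm {R : realType} {X : Type} (m : nat) (f0 : X -> \bar R)
  (f : nat -> X -> \bar R) : \bar R :=
  ereal_sup [set v | exists lam, linf_plus lam /\ v = dualDm m f0 f lam].

Definition solutionDm {R : realType} {X : Type} (m : nat) (f0 : X -> \bar R)
  (f : nat -> X -> \bar R) (lam : nat -> R) : Prop :=
  linf_plus lam /\ dualDm m f0 f lam = valDm m f0 f.

(* The multipliers are built one constraint at a time from the scalar Lagrange
   multiplier theorem: for convex F, G on a convex set with a Slater point of G,
   [p <= F] on [G <= 0] gives some [mu >= 0] with [p <= F + mu G].  Applied on the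
   convex set where the remaining constraints [f_k <= 0], [k > n], still hold, it
   produces lambda_1, lambda_2, ... inductively; applied once more to the single
   tail constraint [sup_{k >= n} f_k <= 0] it gives [nu_n] with
   [p <= f0 + sum_{k<n} lambda_k f_k + nu_n sup_{k >= n} f_k] wherever all these
   functions are finite.  At the Slater point this bounds [sum_{k<n} lambda_k + nu_n]
   uniformly in [n], so [lambda] is summable and [nu] has a cluster point
   [lambda_infty]; letting [n] run along the cluster gives the Lagrangian bound for
   (D), while for (D_m) the tail [nu_m sup_{k >= m} f_k] is dominated by
   [(nu_m + 1) sum_{k >= m} f_k^+].  Weak duality at the solution [xb] then forces
   equality, and equality forces complementary slackness. *)

From HB Require Import structures.
From mathcomp Require Import all_boot all_order all_algebra.
From mathcomp Require Import all_classical all_reals all_analysis.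
From mathcomp Require Import lra.
Import Order.TTheory GRing.Theory Num.Theory.
Import numFieldNormedType.Exports.
Local Open Scope classical_set_scope.
Local Open Scope ring_scope.
Local Open Scope ereal_scope.
Definition convex_on {R : realType} {X : lmodType R} (D : set X) (h : X -> R) :=
  forall x y (t : R), D x -> D y -> (0 < t < 1)%R ->
    (h (t *: x + (1 - t) *: y) <= t * h x + (1 - t) * h y)%R.

Section one_constraint_multiplier.
Local Open Scope ring_scope.
Context {R : realType} {X : lmodType R}.
Variables (D : set X) (F G : X -> R) (p : R).
Hypothesis D_convex : forall x y t, D x -> D y -> 0 < t < 1 -> D (t *: x + (1 - t) *: y).
Hypotheses (F_convex : convex_on D F) (G_convex : convex_on D G).
Hypothesis p_le_F : forall x, D x -> G x <= 0 -> p <= F x.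

(* The point of [x, y] where the convex bound on [G] vanishes is feasible. *)
Lemma multiplier_cross_le x y : D x -> D y -> 0 < G x -> G y < 0 ->
  (p - F x) * (- G y) <= (F y - p) * G x.
Proof.
move=> Dx Dy Gx_gt0 Gy_lt0.
have gap_gt0 : 0 < G x - G y by lra.
set t := - G y / (G x - G y).
have gap_t : (G x - G y) * t = - G y by rewrite mulrCA divff ?mulr1 ?gt_eqF.
have gap_1t : (G x - G y) * (1 - t) = G x by rewrite mulrBr mulr1 gap_t; lra.
have t01 : 0 < t < 1.
  by rewrite divr_gt0 ?oppr_gt0 //= ltr_pdivrMr // mul1r; lra.
clearbody t.
have Dz := D_convex _ _ _ Dx Dy t01.
have Gz_le0 : G (t *: x + (1 - t) *: y) <= 0.
  apply: le_trans (G_convex _ _ _ Dx Dy t01) _.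
  rewrite -(pmulr_rle0 _ gap_gt0) mulrDr !mulrA gap_t gap_1t; lra.
have := ler_wpM2l (ltW gap_gt0) (le_trans (p_le_F _ Dz Gz_le0) (F_convex _ _ _ Dx Dy t01)).
rewrite mulrDr !mulrA gap_t gap_1t; nra.
Qed.

Lemma one_constraint_multiplier : (exists2 y, D y & G y < 0) ->
  exists2 mu, 0 <= mu & forall x, D x -> p <= F x + mu * G x.
Proof.
move=> [y0 Dy0 Gy0_lt0].
pose S := [set (p - F x) / G x | x in [set x | D x /\ 0 < G x]].
have S_ub y : D y -> G y < 0 -> ubound S ((F y - p) / - G y).
  move=> Dy Gy_lt0 _ [x [Dx Gx_gt0] <-].
  rewrite ler_pdivrMr // mulrAC ler_pdivlMr ?oppr_gt0 //.
  exact: multiplier_cross_le.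
have [S0 | Sn0] := eqVneq S set0.
  exists 0 => // x Dx; rewrite mul0r addr0.
  have [Gx_gt0 | Gx_le0] := ltP 0 (G x); last exact: p_le_F.
  suff : S ((p - F x) / G x) by rewrite S0.
  by exists x.
have S_sup : has_sup S by split; [exact/set0P | exists ((F y0 - p) / - G y0); exact: S_ub].
exists (Num.max 0 (sup S)) => [|x Dx]; first by rewrite le_max lexx.
have [Gx_gt0 | Gx_le0] := ltP 0 (G x).
  have : (p - F x) / G x <= Num.max 0 (sup S).
    by rewrite le_max sup_upper_bound ?orbT //; exists x.
  rewrite ler_pdivrMr // => h; lra.
have [-> | Gx_neq0] := eqVneq (G x) 0; first by rewrite mulr0 addr0 p_le_F.
have Gx_lt0 : G x < 0 by rewrite lt_neqAle Gx_neq0.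
have : Num.max 0 (sup S) <= (F x - p) / - G x.
  rewrite ge_max; apply/andP; split; last by apply: ge_sup; [exact/set0P | exact: S_ub].
  by rewrite divr_ge0 ?oppr_ge0 ?subr_ge0 ?(ltW Gx_lt0) ?p_le_F ?(ltW Gx_lt0).
rewrite ler_pdivlMr ?oppr_gt0 // => h; nra.
Qed.

End one_constraint_multiplier.

Section esups_facts.
Context {R : realType}.
Implicit Types (u : (\bar R)^nat) (a : \bar R).

Lemma limn_esupE u : limn_esup u = ereal_inf (range (esups u)).
Proof. by rewrite limn_esup_lim; apply: cvg_lim => //; exact: cvg_esups_inf. Qed.

Lemma limn_esup_le_esups u n : limn_esup u <= esups u n.
Proof. by rewrite limn_esupE; apply: ereal_inf_lbound; exists n. Qed.

Lemma le_esups u n k : (n <= k)%N -> u k <= esups u n.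
Proof. by move=> nk; apply: ereal_sup_ubound; exists k. Qed.

Lemma esups_leP u n a : esups u n <= a <-> forall k, (n <= k)%N -> u k <= a.
Proof.
split=> [una k nk | ua]; first by apply: le_trans una; exact: le_esups.
by apply: ge_ereal_sup => _ [k nk <-]; exact: ua.
Qed.

Lemma limn_esup_lt u a : limn_esup u < a -> exists N, forall n, (N <= n)%N -> u n < a.
Proof.
rewrite limn_esupE => /ereal_inf_lt [_ [N _ <-]] uNa.
by exists N => n Nn; apply: le_lt_trans uNa; exact: le_esups.
Qed.

Lemma limn_esup_eqy u : (forall n, esups u n = +oo) -> limn_esup u = +oo.
Proof. by move=> uy; rewrite limn_esupE; apply/ereal_inf_pinfty => _ [n _ <-]. Qed.

Lemma esups0 u : esups u 0%N = ereal_sup (range u).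
Proof. by congr ereal_sup; apply/seteqP; split=> _ [k _ <-]; exists k. Qed.

Lemma esups0_lty u n : (forall k, u k < +oo) -> esups u n < +oo -> esups u 0%N < +oo.
Proof.
move=> u_lty; elim: n => // n IHn un1_lty; apply: IHn.
have : esups u n <= maxe (u n) (esups u n.+1).
  apply/esups_leP => k; rewrite leq_eqVlt => /predU1P [<- | nk].
    by rewrite le_max lexx.
  by rewrite le_max le_esups ?orbT.
by move/le_lt_trans; apply; rewrite gt_max u_lty.
Qed.

End esups_facts.

Lemma convex_comb_le {R : realType} (t : R) (a b a' b' : \bar R) : (0 < t < 1)%R ->
  a <= a' -> b <= b' -> t%:E * a + (1 - t)%:E * b <= t%:E * a' + (1 - t)%:E * b'.
Proof.
case/andP=> t_gt0 t_lt1 aa' bb'.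
by apply: leeD; apply: lee_wpmul2l => //; rewrite lee_fin ?subr_ge0 ltW.
Qed.

Lemma fin_num_convex_comb {R : realType} (t : R) (a b : \bar R) :
  a \is a fin_num -> b \is a fin_num -> t%:E * a + (1 - t)%:E * b \is a fin_num.
Proof. by move=> a_fin b_fin; rewrite fin_numD !fin_numM. Qed.

Lemma fine_convex_comb {R : realType} (t : R) (a b c : \bar R) :
  a \is a fin_num -> b \is a fin_num -> c \is a fin_num ->
  a <= t%:E * b + (1 - t)%:E * c -> (fine a <= t * fine b + (1 - t) * fine c)%R.
Proof.
move=> a_fin b_fin c_fin.
by rewrite -(fineK a_fin) -(fineK b_fin) -(fineK c_fin) -!EFinM -EFinD lee_fin.
Qed.

Definition sup_dom {R : realType} {X : Type} (f0 : X -> \bar R) (f : nat -> X -> \bar R) x :=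
  f0 x < +oo /\ ereal_sup (range (fun k => f k x)) < +oo.

Definition tail_sup {R : realType} {X : Type} (f : nat -> X -> \bar R) n x :=
  esups (fun k => f k x) n.

Section sup_domain.
Context {R : realType} {X : Type} {f0 : X -> \bar R} {f : nat -> X -> \bar R}.
Hypotheses (f0_proper : proper_efun f0) (f_proper : forall k, proper_efun (f k)).
Local Notation sup_dom := (sup_dom f0 f).
Local Notation tail_sup := (tail_sup f).

Lemma f_le_sup k x : f k x <= ereal_sup (range (fun k => f k x)).
Proof. by apply: ereal_sup_ubound; exists k. Qed.

Lemma f_le_tail_sup n k x : (n <= k)%N -> f k x <= tail_sup n x.
Proof. exact: le_esups. Qed.

Lemma tail_sup_le_sup n x : tail_sup n x <= ereal_sup (range (fun k => f k x)).
Proof. by apply/esups_leP => k _; exact: f_le_sup. Qed.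

Lemma fin_num_f0 x : sup_dom x -> f0 x \is a fin_num.
Proof. by case=> f0x_lty _; rewrite fin_numElt f0x_lty ltNye f0_proper.1. Qed.

Lemma fin_num_f k x : sup_dom x -> f k x \is a fin_num.
Proof.
case=> _ sup_lty; rewrite fin_numElt ltNye (f_proper k).1.
exact: le_lt_trans (f_le_sup k x) sup_lty.
Qed.

Lemma fin_num_sup x : sup_dom x -> ereal_sup (range (fun k => f k x)) \is a fin_num.
Proof.
move=> dx; rewrite fin_numElt dx.2 andbT.
by apply: lt_le_trans (f_le_sup 0 x); rewrite ltNye (f_proper 0).1.
Qed.

Lemma fin_num_tail_sup n x : sup_dom x -> tail_sup n x \is a fin_num.
Proof.
move=> dx; rewrite fin_numElt (le_lt_trans (tail_sup_le_sup n x) dx.2) andbT.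
apply: (@lt_le_trans _ _ (f n x)); last exact: f_le_tail_sup.
by rewrite ltNye (f_proper n).1.
Qed.

Lemma sup_dom_of_tail_sup n x : f0 x < +oo -> (forall k, f k x < +oo) ->
  tail_sup n x < +oo -> sup_dom x.
Proof.
by move=> f0x_lty f_lty tail_lty; split; rewrite // -esups0; exact: esups0_lty tail_lty.
Qed.

End sup_domain.

Section sup_domain_convex.
Context {R : realType} {X : lmodType R} {f0 : X -> \bar R} {f : nat -> X -> \bar R}.
Hypotheses (f0_proper : proper_efun f0) (f_proper : forall k, proper_efun (f k)).
Hypotheses (f0_convex : convex_efun f0) (f_convex : forall k, convex_efun (f k)).
Local Notation sup_dom := (sup_dom f0 f).
Local Notation tail_sup := (tail_sup f).

Lemma sup_dom_convex x y t : sup_dom x -> sup_dom y -> (0 < t < 1)%R ->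
  sup_dom (t *: x + (1 - t) *: y)%R.
Proof.
move=> dx dy t01; split.
  apply: le_lt_trans (f0_convex x y t t01) _.
  by rewrite ltey_eq fin_num_convex_comb ?(fin_num_f0 f0_proper _ dx) ?(fin_num_f0 f0_proper _ dy).
apply: le_lt_trans (_ : _ <= t%:E * ereal_sup (range (fun k => f k x)) +
  (1 - t)%:E * ereal_sup (range (fun k => f k y))) _.
  apply: ge_ereal_sup => _ [k _ <-]; apply: le_trans (f_convex k x y t t01) _.
  exact: convex_comb_le (f_le_sup k x) (f_le_sup k y).
by rewrite ltey_eq fin_num_convex_comb ?(fin_num_sup f_proper _ dx) ?(fin_num_sup f_proper _ dy).
Qed.

Lemma tail_sup_convex n x y t : (0 < t < 1)%R ->
  tail_sup n (t *: x + (1 - t) *: y)%R <= t%:E * tail_sup n x + (1 - t)%:E * tail_sup n y.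
Proof.
move=> t01; apply/esups_leP => k nk; apply: le_trans (f_convex k x y t t01) _.
by apply: convex_comb_le => //; exact: f_le_tail_sup.
Qed.

Lemma fine_convex_on (g : X -> \bar R) :
  (forall x, sup_dom x -> g x \is a fin_num) ->
  (forall x y (t : R), sup_dom x -> sup_dom y -> (0 < t < 1)%R ->
     g (t *: x + (1 - t) *: y)%R <= t%:E * g x + (1 - t)%:E * g y) ->
  convex_on sup_dom (fine \o g).
Proof.
move=> g_fin g_convex x y t dx dy t01.
apply: fine_convex_comb; rewrite ?g_fin ?g_convex //.
exact: sup_dom_convex.
Qed.

End sup_domain_convex.

Section convex_on_algebra.
Local Open Scope ring_scope.
Context {R : realType} {X : lmodType R}.
Variable D : set X.

Lemma convex_onD (F G : X -> R) :
  convex_on D F -> convex_on D G -> convex_on D (fun x => F x + G x).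
Proof.
move=> F_cvx G_cvx x y t Dx Dy t01.
apply: le_trans (lerD (F_cvx _ _ _ Dx Dy t01) (G_cvx _ _ _ Dx Dy t01)) _.
by rewrite !mulrDr addrACA.
Qed.

Lemma convex_onZ (c : R) (F : X -> R) :
  0 <= c -> convex_on D F -> convex_on D (fun x => c * F x).
Proof.
move=> c_ge0 F_cvx x y t Dx Dy t01.
apply: le_trans (ler_wpM2l c_ge0 (F_cvx _ _ _ Dx Dy t01)) _.
by rewrite mulrDr !mulrA [c * t]mulrC [c * (1 - t)]mulrC.
Qed.

Lemma convex_on_sum n (F : nat -> X -> R) :
  (forall j, (j < n)%N -> convex_on D (F j)) ->
  convex_on D (fun x => \sum_(0 <= j < n) F j x).
Proof.
move=> F_cvx x y t Dx Dy t01; rewrite !mulr_sumr -big_split /=.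
by apply: ler_sum_nat => j /andP[_ jn]; exact: F_cvx.
Qed.

Lemma convex_on_sub (D' : set X) (F : X -> R) :
  D' `<=` D -> convex_on D F -> convex_on D' F.
Proof. by move=> D'D F_cvx x y t D'x D'y; apply: F_cvx; exact: D'D. Qed.

End convex_on_algebra.

Definition partial_lagrangian {R : realType} {X : Type} (f0 : X -> \bar R)
    (f : nat -> X -> \bar R) (lam : nat -> R) n x : R :=
  fine (f0 x) + \sum_(0 <= j < n) lam j * fine (f j x).

Lemma eq_partial_lagrangian {R : realType} {X : Type} (f0 : X -> \bar R)
    (f : nat -> X -> \bar R) {lam lam' : nat -> R} {n : nat} :
  (forall j, (j < n)%N -> lam j = lam' j) ->
  partial_lagrangian f0 f lam n = partial_lagrangian f0 f lam' n.
Proof.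
move=> lam_eq; apply/funext => x; congr (_ + _)%R.
by apply: eq_big_nat => j /andP[_ jn]; rewrite lam_eq.
Qed.

Lemma partial_lagrangianS {R : realType} {X : Type} (f0 : X -> \bar R)
    (f : nat -> X -> \bar R) (lam : nat -> R) n x :
  partial_lagrangian f0 f lam n.+1 x =
    (partial_lagrangian f0 f lam n x + lam n * fine (f n x))%R.
Proof. by rewrite /partial_lagrangian big_nat_recr // addrA. Qed.

Definition partial_multipliers {R : realType} {X : Type} (f0 : X -> \bar R)
    (f : nat -> X -> \bar R) (p : R) n (lam : nat -> R) :=
  (forall j, (j < n)%N -> (0 <= lam j)%R) /\
  forall x, sup_dom f0 f x -> tail_sup f n x <= 0 -> (p <= partial_lagrangian f0 f lam n x)%R.

Definition slater_bound {R : realType} {X : Type} (f0 : X -> \bar R)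
    (f : nat -> X -> \bar R) (p : R) (x0 : X) :=
  ((fine (f0 x0) - p) / - fine (ereal_sup (range (fun k => f k x0))))%R.

Section multipliers.
Context {R : realType} {X : lmodType R} {f0 : X -> \bar R} {f : nat -> X -> \bar R}.
Context {p : R} {x0 : X}.
Hypotheses (f0_proper : proper_efun f0) (f_proper : forall k, proper_efun (f k)).
Hypotheses (f0_convex : convex_efun f0) (f_convex : forall k, convex_efun (f k)).
Hypothesis p_le_f0 :
  forall x, sup_dom f0 f x -> (forall k, f k x <= 0) -> (p <= fine (f0 x))%R.
Hypotheses (x0_dom : f0 x0 < +oo) (x0_slater : ereal_sup (range (fun k => f k x0)) < 0).

Let D := sup_dom f0 f.

Let x0_D : D x0.
Proof. by split=> //; exact: lt_trans x0_slater (ltry 0). Qed.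

Let fine_f0_convex : convex_on D (fine \o f0).
Proof. by apply: fine_convex_on => // [x|x y t _ _]; [exact: fin_num_f0 | exact: f0_convex]. Qed.

Let fine_f_convex k : convex_on D (fine \o f k).
Proof. by apply: fine_convex_on => // [x|x y t _ _]; [exact: fin_num_f | exact: f_convex]. Qed.

Let fine_tail_sup_convex n : convex_on D (fine \o tail_sup f n).
Proof.
apply: fine_convex_on => // [x|x y t _ _]; first exact: fin_num_tail_sup.
exact: tail_sup_convex.
Qed.

Lemma partial_lagrangian_convex (lam : nat -> R) n :
  (forall j, (j < n)%N -> (0 <= lam j)%R) -> convex_on D (partial_lagrangian f0 f lam n).
Proof.
move=> lam_ge0; apply: convex_onD; first exact: fine_f0_convex.
apply: convex_on_sum => j jn.
exact: convex_onZ (lam_ge0 j jn) (fine_f_convex j).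
Qed.

Local Notation partial_multipliers := (partial_multipliers f0 f p).

Lemma partial_multipliers0 lam : partial_multipliers 0 lam.
Proof.
split=> // x Dx /esups_leP x_feas.
by rewrite /partial_lagrangian big_geq // addr0; apply: p_le_f0 => // k; exact: x_feas.
Qed.

Lemma eq_partial_multipliers n lam lam' : (forall j, (j < n)%N -> lam j = lam' j) ->
  partial_multipliers n lam -> partial_multipliers n lam'.
Proof.
move=> lam_eq [lam_ge0 lam_mult]; split=> [j jn | x]; first by rewrite -lam_eq ?lam_ge0.
by rewrite -(eq_partial_lagrangian f0 f lam_eq); exact: lam_mult.
Qed.

Lemma partial_multipliersS n lam : partial_multipliers n lam ->
  exists mu, partial_multipliers n.+1 (fun j => if j == n then mu else lam j).
Proof.
move=> [lam_ge0 lam_mult].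
pose Dn := [set x | D x /\ tail_sup f n.+1 x <= 0].
have [mu mu_ge0 mu_mult] : exists2 mu, (0 <= mu)%R &
    forall x, Dn x -> (p <= partial_lagrangian f0 f lam n x + mu * fine (f n x))%R.
  apply: (@one_constraint_multiplier _ _ Dn _ (fine \o f n)).
  - move=> x y t [Dx x_feas] [Dy y_feas] t01; split; first exact: sup_dom_convex.
    apply: le_trans; first exact: tail_sup_convex.
    case/andP: t01 => t_gt0 t_lt1.
    by apply: adde_le0; apply: mule_ge0_le0; rewrite // lee_fin ?subr_ge0 ltW.
  - by apply: (@convex_on_sub _ _ D) => [x [] | ]; last exact: partial_lagrangian_convex.
  - by apply: (@convex_on_sub _ _ D) => [x [] | ]; last exact: fine_f_convex.
  - move=> x [Dx /esups_leP x_feas] fnx_le0; apply: lam_mult => //.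
    apply/esups_leP => k; rewrite leq_eqVlt => /predU1P [<- | nk]; last exact: x_feas.
    by rewrite -(fineK (fin_num_f f_proper _ _ Dx)) lee_fin.
  - exists x0.
      by split=> //; apply: ltW; apply: le_lt_trans x0_slater; exact: tail_sup_le_sup.
    rewrite /= -lte_fin (fineK (fin_num_f f_proper _ _ x0_D)).
    by apply: le_lt_trans x0_slater; exact: f_le_sup.
exists mu; split=> [j | x Dx x_feas].
  by rewrite ltnS leq_eqVlt => /predU1P [-> | jn]; rewrite ?eqxx // ltn_eqF ?lam_ge0.
rewrite partial_lagrangianS eqxx (@eq_partial_lagrangian _ _ f0 f _ lam) => [|j jn].
  exact: mu_mult.
by rewrite ltn_eqF.
Qed.

Lemma multipliers_exist : exists lam, forall n, partial_multipliers n lam.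
Proof.
(* Dependent choice: [lams n.+1] only adds the value at index [n] to [lams n]. *)
have /choice [next next_mult] : forall nl : nat * (nat -> R), exists mu,
    partial_multipliers nl.1 nl.2 ->
    partial_multipliers nl.1.+1 (fun j => if j == nl.1 then mu else nl.2 j).
  move=> [n lam].
  have [/partial_multipliersS [mu] | not_mult] := pselect (partial_multipliers n lam).
    by exists mu.
  by exists 0%R => /not_mult.
pose fix lams n := if n is m.+1 then (fun j => if j == m then next (m, lams m) else lams m j)
  else (fun=> 0%R).
have lams_mult n : partial_multipliers n (lams n).
  by elim: n => [|n IHn]; [exact: partial_multipliers0 | exact: next_mult (n, lams n) IHn].
have lams_stable n j : (j < n)%N -> lams n j = lams j.+1 j.
  elim: n => // n IHn; rewrite ltnS leq_eqVlt => /predU1P [-> // | jn] /=.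
  by rewrite ltn_eqF // IHn.
exists (fun j => lams j.+1 j) => n.
by apply: eq_partial_multipliers (lams_mult n) => j; exact: lams_stable.
Qed.

Lemma tail_multiplier n lam : partial_multipliers n lam -> exists2 nu, (0 <= nu)%R &
  forall x, D x -> (p <= partial_lagrangian f0 f lam n x + nu * fine (tail_sup f n x))%R.
Proof.
move=> [lam_ge0 lam_mult].
apply: (@one_constraint_multiplier _ _ D _ (fine \o tail_sup f n)).
- by move=> x y t; exact: sup_dom_convex.
- exact: partial_lagrangian_convex.
- exact: fine_tail_sup_convex.
- move=> x Dx; rewrite /= -lee_fin (fineK (fin_num_tail_sup f_proper _ _ Dx)).
  exact: lam_mult.
- exists x0 => //; rewrite /= -lte_fin (fineK (fin_num_tail_sup f_proper _ _ x0_D)).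
  by apply: le_lt_trans x0_slater; exact: tail_sup_le_sup.
Qed.

Lemma multiplier_mass_le n lam nu :
  (forall j, (j < n)%N -> (0 <= lam j)%R) -> (0 <= nu)%R ->
  (p <= partial_lagrangian f0 f lam n x0 + nu * fine (tail_sup f n x0))%R ->
  (\sum_(0 <= j < n) lam j + nu <= slater_bound f0 f p x0)%R.
Proof.
move=> lam_ge0 nu_ge0; rewrite /partial_lagrangian /slater_bound.
set s := fine (ereal_sup (range (fun k => f k x0))).
have s_lt0 : (s < 0)%R by rewrite -lte_fin fineK // (fin_num_sup f_proper _ x0_D).
have le_s (a : \bar R) : a \is a fin_num ->
    a <= ereal_sup (range (fun k => f k x0)) -> (fine a <= s)%R.
  by move=> a_fin; apply: fine_le a_fin (fin_num_sup f_proper _ x0_D).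
have sum_le : (\sum_(0 <= j < n) lam j * fine (f j x0) <= (\sum_(0 <= j < n) lam j) * s)%R.
  rewrite mulr_suml; apply: ler_sum_nat => j /andP[_ jn]; apply: ler_wpM2l; first exact: lam_ge0.
  by apply: le_s; [exact: fin_num_f f_proper _ _ x0_D | exact: f_le_sup].
have tail_le : (nu * fine (tail_sup f n x0) <= nu * s)%R.
  apply: ler_wpM2l => //; apply: le_s; last exact: tail_sup_le_sup.
  exact: fin_num_tail_sup f_proper _ _ x0_D.
rewrite ler_pdivlMr ?oppr_gt0 // mulrN mulrDl; lra.
Qed.

Lemma lagrange_multipliers : exists lam nu : nat -> R,
  [/\ forall k, (0 <= lam k)%R, forall n, (0 <= nu n)%R,
      forall n x, D x -> (p <= partial_lagrangian f0 f lam n x + nu n * fine (tail_sup f n x))%R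
    & forall n, (\sum_(0 <= j < n) lam j + nu n <= slater_bound f0 f p x0)%R].
Proof.
have [lam lam_mult] := multipliers_exist.
have /choice [nu nu_spec] n : exists nu, (0 <= nu)%R /\
    forall x, D x -> (p <= partial_lagrangian f0 f lam n x + nu * fine (tail_sup f n x))%R.
  by have [nu] := tail_multiplier _ _ (lam_mult n); exists nu.
exists lam, nu; split=> [k | n | n | n]; first exact: (lam_mult k.+1).1.
- exact: (nu_spec n).1.
- exact: (nu_spec n).2.
- exact: multiplier_mass_le (lam_mult n).1 (nu_spec n).1 ((nu_spec n).2 x0 x0_D).
Qed.

End multipliers.

Section extended_arithmetic.
Context {R : realType}.

Lemma dual_addeEFin (r s : R) : dual_adde r%:E s%:E = (r + s)%:E.
Proof. by []. Qed.

Lemma dual_addey (x : \bar R) : dual_adde x +oo = +oo.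
Proof. by case: x. Qed.

Lemma dual_addye (x : \bar R) : dual_adde +oo x = +oo.
Proof. by case: x. Qed.

Lemma dual_addeA : associative (@dual_adde R).
Proof. exact: DualAddTheoryNumDomain.daddeA. Qed.

Lemma gee_dual_addl (x y : \bar R) : y <= 0 -> dual_adde x y <= x.
Proof. exact: DualAddTheoryRealDomain.gee_dDl. Qed.

Lemma dual_addeEFin_eq (r : R) (y : \bar R) : y <= 0 -> dual_adde r%:E y = r%:E -> y = 0.
Proof. by case: y => [s | | ] //= _ [rs]; congr EFin; lra. Qed.

Lemma lee_dual_add2l (x a b : \bar R) : a <= b -> dual_adde x a <= dual_adde x b.
Proof. exact: DualAddTheoryRealDomain.lee_dD2l. Qed.

Lemma nsumr_nat_eq0 (F : nat -> R) m : (forall j, (F j <= 0)%R) ->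
  (\sum_(0 <= j < m) F j = 0)%R -> forall k, (k < m)%N -> F k = 0%R.
Proof.
move=> F_le0 /eqP; rewrite -oppr_eq0 -sumrN psumr_eq0 => [/allP F0 k km | j _]; last first.
  by rewrite oppr_ge0.
by apply/eqP; rewrite -oppr_eq0; apply: (implyP (F0 k _)); rewrite // mem_index_iota.
Qed.

Lemma emulc_fin (l : R) (a : \bar R) : a \is a fin_num -> emulc l a = (l * fine a)%:E.
Proof. by case: a. Qed.

Lemma emulc_ge0 (l : R) (a : \bar R) : (0 <= l)%R -> 0 <= a -> 0 <= emulc l a.
Proof. by move=> l_ge0 a_ge0; rewrite /emulc; case: ifP => // _; exact: mule_ge0. Qed.

Lemma emulc_neqNy (l : R) (a : \bar R) : a != -oo -> emulc l a != -oo.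
Proof. by rewrite /emulc; case: a => // r _; case: ifP. Qed.

Lemma sum_emulc_fin (l : nat -> R) (a : nat -> \bar R) n :
  (forall k, a k \is a fin_num) ->
  \sum_(0 <= k < n) emulc (l k) (a k) = (\sum_(0 <= k < n) l k * fine (a k))%:E.
Proof. by move=> a_fin; rewrite -sumEFin; apply: eq_bigr => k _; exact: emulc_fin. Qed.

Lemma sum_emulc_eqy (l : nat -> R) (a : nat -> \bar R) n k :
  (forall k, a k != -oo) -> a k = +oo -> (k < n)%N ->
  \sum_(0 <= k < n) emulc (l k) (a k) = +oo.
Proof.
move=> a_neqNy ak_eqy kn; apply/esum_eqyP => [j _ | ]; first exact: emulc_neqNy.
by exists k; rewrite mem_index_iota kn ak_eqy.
Qed.

Lemma emulc_pos_part_le_series (l : nat -> R) (a : nat -> \bar R) m k :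
  (forall k, (0 <= l k)%R) -> (m <= k)%N ->
  emulc (l k) (maxe (a k) 0) <= \sum_(m <= i <oo) emulc (l i) (maxe (a i) 0).
Proof.
move=> l_ge0 mk.
have term_ge0 i : 0 <= emulc (l i) (maxe (a i) 0) by rewrite emulc_ge0 // le_max lexx orbT.
apply: le_trans (nneseries_lim_ge k.+1 (fun i _ _ => term_ge0 i)).
by rewrite big_nat_recr //= leeDr // sume_ge0.
Qed.

Lemma le_dual_adde_emulc (q c : R) (A L : \bar R) : (0 <= c)%R -> L < +oo ->
  (forall r s : R, A < r%:E -> L < s%:E -> (q <= r + c * s)%R) ->
  q%:E <= dual_adde A (emulc c L).
Proof.
move=> c_ge0 L_lty q_le.
have [s0 L_lt_s0] : exists s0 : R, L < s0%:E.
  exists (fine L + 1)%R; case: L L_lty {q_le} => [l | | ] //= _; last exact: ltNyr.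
  by rewrite lte_fin ltrDl.
case: A q_le => [a | | ] q_le; first last.
- by exfalso; have := q_le (q - c * s0 - 1)%R s0 (ltNyr _) L_lt_s0; lra.
- by rewrite dual_addye leey.
case: L L_lty L_lt_s0 q_le => [l | | ] // _ _ q_le.
  rewrite emulc_fin // lee_fin /=; apply/ler_addgt0Pr => e e_gt0.
  pose d := (e / (1 + c))%R.
  have d_gt0 : (0 < d)%R by rewrite divr_gt0 // ltr_pwDl.
  have d_e : (d + c * d = e)%R.
    by rewrite -{1}(mul1r d) -mulrDl mulrC divfK // gt_eqF // ltr_pwDl.
  have := q_le (a + d)%R (l + d)%R; rewrite !lte_fin !ltrDl d_gt0 mulrDr.
  by move=> /(_ isT isT); lra.
have [-> | c_neq0] := eqVneq c 0%R.
  have -> : emulc (0 : R) -oo = 0%R%:E by rewrite /emulc /= mul0e.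
  rewrite dual_addeEFin addr0 lee_fin; apply/ler_addgt0Pr => e e_gt0.
  by have := q_le (a + e)%R 0%R; rewrite lte_fin ltrDl e_gt0 mulr0 addr0 => /(_ isT (ltNyr _)).
have c_gt0 : (0 < c)%R by rewrite lt_neqAle eq_sym c_neq0.
have := q_le (a + 1)%R ((q - a - 2) / c)%R; rewrite lte_fin ltrDl ltr01 mulrCA divff ?gt_eqF //.
by rewrite mulr1 => /(_ isT (ltNyr _)) => ?; exfalso; lra.
Qed.

Lemma pos_part_le_series_bound (l : nat -> R) (a c : R) (u : nat -> \bar R) m k :
  (forall i, (0 <= l i)%R) -> (0 < a)%R -> (forall i, (m <= i)%N -> l i = a) ->
  \sum_(m <= i <oo) emulc (l i) (maxe (u i) 0) = c%:E -> (m <= k)%N -> u k <= (c / a)%:E.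
Proof.
move=> l_ge0 a_gt0 l_tail series_eq mk.
have := @emulc_pos_part_le_series l u m k l_ge0 mk; rewrite series_eq l_tail //.
case: (u k) => [r | | ] //=; last by rewrite leNye.
rewrite /emulc -EFin_max /= -EFinM !lee_fin ler_pdivlMr // => ar_le_c.
by apply: le_trans ar_le_c; rewrite mulrC ler_pM2l // le_max lexx.
Qed.

End extended_arithmetic.

(* The tail weight exceeds [nu m] so that a finite Lagrangian value forces [x] into [sup_dom]. *)
Definition multipliers_Dm {R : realType} (lam nu : nat -> R) m k :=
  if (k < m)%N then lam k else (nu m + 1)%R.

Section lagrangian_lower_bounds.
Context {R : realType} {X : Type} {f0 : X -> \bar R} {f : nat -> X -> \bar R}.
Hypotheses (f0_proper : proper_efun f0) (f_proper : forall k, proper_efun (f k)).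
Context {p : R} {lam nu : nat -> R}.
Hypotheses (lam_ge0 : forall k, (0 <= lam k)%R) (nu_ge0 : forall n, (0 <= nu n)%R).
Hypothesis nu_tail : forall n x, sup_dom f0 f x ->
  (p <= partial_lagrangian f0 f lam n x + nu n * fine (tail_sup f n x))%R.

Let f_neqNy x k : f k x != -oo. Proof. exact: (f_proper k).1. Qed.

Lemma lagDm_ge m x : p%:E <= lagDm m f0 f (multipliers_Dm lam nu m) x.
Proof.
set l := multipliers_Dm lam nu m.
have l_ge0 k : (0 <= l k)%R.
  by rewrite /l /multipliers_Dm; case: ifP => _; rewrite ?lam_ge0 ?addr_ge0.
have a_gt0 : (0 < nu m + 1)%R by rewrite ltr_wpDl.
have l_tail k : (m <= k)%N -> l k = (nu m + 1)%R by rewrite /l /multipliers_Dm ltnNge => ->.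
rewrite /lagDm; set C := \sum_(m <= k <oo) _.
have C_ge0 : 0 <= C by apply: nneseries_ge0 => k _ _; rewrite emulc_ge0 // le_max lexx orbT.
have [-> | C_neqy] := eqVneq C +oo; first by rewrite dual_addey leey.
have [c C_eq] : exists c, C = c%:E by move: C_ge0 C_neqy; case: C => [c | | ] // _ _; exists c.
have f_le k : (m <= k)%N -> f k x <= (c / (nu m + 1))%:E.
  exact: (@pos_part_le_series_bound _ l _ _ (fun k => f k x)).
have [-> | f0_neqy] := eqVneq (f0 x) +oo; first by rewrite !dual_addye leey.
have [[k fk_eqy] | f_lty] := pselect (exists k, f k x = +oo).
  have km : (k < m)%N by rewrite ltnNge; apply/negP => /f_le; rewrite fk_eqy.
  by rewrite (@sum_emulc_eqy _ l (fun k => f k x) m k (f_neqNy x)) ?dual_addey ?dual_addye ?leey.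
have dx : sup_dom f0 f x.
  apply: (@sup_dom_of_tail_sup _ _ _ _ m); first by rewrite ltey.
    by move=> k; rewrite ltey; apply/eqP => fk_eqy; apply: f_lty; exists k.
  by apply: (@le_lt_trans _ _ (c / (nu m + 1))%:E); [apply/esups_leP | exact: ltry].
have tail_le : (fine (tail_sup f m x) <= c / (nu m + 1))%R.
  by rewrite -lee_fin (fineK (fin_num_tail_sup f_proper _ _ dx)); apply/esups_leP.
rewrite sum_emulc_fin => [|k]; last exact: fin_num_f f_proper _ _ dx.
rewrite -(fineK (fin_num_f0 f0_proper _ dx)) C_eq !dual_addeEFin lee_fin.
have -> : (\sum_(0 <= k < m) l k * fine (f k x) = \sum_(0 <= k < m) lam k * fine (f k x))%R.
  by apply: eq_big_nat => k /andP[_ km]; rewrite /l /multipliers_Dm km.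
have nu_tail_le : (nu m * fine (tail_sup f m x) <= c)%R.
  apply: le_trans (ler_wpM2l (nu_ge0 m) tail_le) _.
  by rewrite mulrCA ler_piMr ?ler_pdivrMr ?mul1r ?lerDl // -lee_fin -C_eq.
by have := nu_tail m x dx; rewrite /partial_lagrangian; lra.
Qed.

Lemma lagD_eqy (l : nat -> R) (li : R) x : ~ sup_dom f0 f x -> lagD f0 f l li x = +oo.
Proof.
move=> x_out; rewrite /lagD.
have [-> | f0_neqy] := eqVneq (f0 x) +oo; first by rewrite !dual_addye.
have [[k fk_eqy] | f_lty] := pselect (exists k, f k x = +oo).
  rewrite limn_esup_eqy ?dual_addey ?dual_addye // => n.
  apply/eqP; rewrite eq_le leey /=; apply: ereal_sup_ubound.
  exists (maxn n k.+1); first exact: leq_maxl.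
  by rewrite (@sum_emulc_eqy _ l (fun k => f k x) _ k (f_neqNy x)) // leq_max ltnSn orbT.
suff -> : finf f x = +oo by rewrite dual_addey.
apply: limn_esup_eqy => n; apply/eqP; rewrite eq_le leey /= leNgt; apply/negP => tail_lty.
apply: x_out; apply: (@sup_dom_of_tail_sup _ _ _ _ n) => // [|k]; first by rewrite ltey.
by rewrite ltey; apply/eqP => fk_eqy; apply: f_lty; exists k.
Qed.

Context {c : R}.
Hypotheses (c_ge0 : (0 <= c)%R) (nu_cluster : cluster (nu @ \oo) c).

Lemma lagD_finite_bound x : sup_dom f0 f x -> forall r s : R,
  limn_esup (fun n => \sum_(0 <= k < n) emulc (lam k) (f k x)) < r%:E ->
  finf f x < s%:E -> (p - fine (f0 x) <= r + c * s)%R.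
Proof.
move=> dx r s /limn_esup_lt [N1 sum_lt] /limn_esup_lt [N2 f_lt].
apply/ler_addgt0Pr => e e_gt0.
have [n Nn nu_close] := (cluster_eventuallyP _ _).1 nu_cluster (e / (`|s| + 1))%R (maxn N1 N2)
  (divr_gt0 e_gt0 (ltr_wpDl (normr_ge0 s) ltr01)).
have sum_le : (\sum_(0 <= j < n) lam j * fine (f j x) <= r)%R.
  have := sum_lt n (leq_trans (leq_maxl _ _) Nn).
  by rewrite sum_emulc_fin => [/ltW | k]; [rewrite lee_fin | exact: fin_num_f f_proper _ _ dx].
have tail_le : (fine (tail_sup f n x) <= s)%R.
  rewrite -lee_fin (fineK (fin_num_tail_sup f_proper _ _ dx)); apply/esups_leP => k nk.
  by apply/ltW/f_lt; exact: leq_trans (leq_maxr N1 N2) (leq_trans Nn nk).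
have nu_tail_le : (nu n * fine (tail_sup f n x) <= nu n * s)%R by exact: ler_wpM2l.
have cluster_err : (nu n * s - c * s <= e)%R.
  rewrite -mulrBl; apply: le_trans (ler_norm _) _; rewrite normrM distrC.
  apply: le_trans (ler_wpM2r (normr_ge0 s) nu_close) _.
  rewrite mulrAC ler_pdivrMr ?ltr_wpDl // ler_wpM2l ?lerDl //; exact: ltW.
by have := nu_tail n x dx; rewrite /partial_lagrangian; lra.
Qed.

Lemma lagD_ge x : p%:E <= lagD f0 f lam c x.
Proof.
have [dx | x_out] := pselect (sup_dom f0 f x); last by rewrite lagD_eqy ?leey.
rewrite /lagD -(fineK (fin_num_f0 f0_proper _ dx)) -dual_addeA.
apply: (@le_trans _ _ (dual_adde (fine (f0 x))%:E (p - fine (f0 x))%:E)).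
  by rewrite dual_addeEFin addrC subrK.
apply: lee_dual_add2l; apply: le_dual_adde_emulc => //; last exact: lagD_finite_bound.
apply: le_lt_trans (limn_esup_le_esups _ 0) _.
by rewrite ltey_eq (fin_num_tail_sup f_proper _ _ dx).
Qed.

End lagrangian_lower_bounds.

Section weak_duality.
Context {R : realType} {X : Type} {f0 : X -> \bar R} {f : nat -> X -> \bar R} {xb : X}.
Hypotheses (f0_proper : proper_efun f0) (f_proper : forall k, proper_efun (f k)).
Hypothesis xb_feasible : feasible f0 f xb.

Let xb_dom : sup_dom f0 f xb.
Proof.
split; first exact: xb_feasible.1.
by apply: le_lt_trans (ltry 0); apply: ge_ereal_sup => _ [k _ <-]; exact: xb_feasible.2.
Qed.

Lemma lagrange_term_xb_le0 (l : nat -> R) k : (0 <= l k)%R -> (l k * fine (f k xb) <= 0)%R.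
Proof. by move=> lk_ge0; rewrite mulr_ge0_le0 // fine_le0 // xb_feasible.2. Qed.

Lemma lagDm_xb m (l : nat -> R) : (forall k, (0 <= l k)%R) ->
  lagDm m f0 f l xb = (fine (f0 xb) + \sum_(0 <= k < m) l k * fine (f k xb))%:E.
Proof.
move=> l_ge0; rewrite /lagDm sum_emulc_fin => [|k]; last exact: fin_num_f f_proper _ _ xb_dom.
rewrite eseries0 => [|k _ _]; last by rewrite (max_idPr (xb_feasible.2 k)) emulc_fin //= mulr0.
by rewrite -(fineK (fin_num_f0 f0_proper _ xb_dom)) -[0]/(0%R%:E) !dual_addeEFin addr0.
Qed.

Lemma lagDm_xb_le m (l : nat -> R) : (forall k, (0 <= l k)%R) -> lagDm m f0 f l xb <= f0 xb.
Proof.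
move=> l_ge0; rewrite lagDm_xb // -[leRHS](fineK (fin_num_f0 f0_proper _ xb_dom)) lee_fin.
by rewrite gerDl sumr_le0 // => k _; exact: lagrange_term_xb_le0.
Qed.

Lemma lagDm_xb_slack m (l : nat -> R) : (forall k, (0 <= l k)%R) ->
  lagDm m f0 f l xb = f0 xb -> forall k, (k < m)%N -> emulc (l k) (f k xb) = 0.
Proof.
move=> l_ge0; rewrite lagDm_xb // -[RHS](fineK (fin_num_f0 f0_proper _ xb_dom)).
move=> [lag_eq] k km.
have sum0 : (\sum_(0 <= k < m) l k * fine (f k xb) = 0)%R by lra.
rewrite emulc_fin ?(fin_num_f f_proper _ _ xb_dom) //.
by rewrite (nsumr_nat_eq0 _ _ _ sum0 _ km) // => j; exact: lagrange_term_xb_le0.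
Qed.

Lemma limn_esup_lagrange_xb_le (l : nat -> R) n : (forall k, (0 <= l k)%R) ->
  limn_esup (fun n => \sum_(0 <= k < n) emulc (l k) (f k xb)) <=
    (\sum_(0 <= k < n) l k * fine (f k xb))%:E.
Proof.
move=> l_ge0; apply: le_trans (limn_esup_le_esups _ n) _; apply/esups_leP => k nk.
rewrite sum_emulc_fin => [|j]; last exact: fin_num_f f_proper _ _ xb_dom.
rewrite lee_fin (big_cat_nat (leq0n n) nk) /= gerDl sumr_le0 // => j _.
exact: lagrange_term_xb_le0.
Qed.

Lemma emulc_finf_xb_le0 (li : R) : (0 <= li)%R -> emulc li (finf f xb) <= 0.
Proof.
have finf_le0 : finf f xb <= 0.
  by apply: le_trans (limn_esup_le_esups _ 0) _; apply/esups_leP => k _; exact: xb_feasible.2.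
move=> li_ge0; rewrite /emulc; case: ifP => [/eqP finf_eqy | _]; last exact: mule_ge0_le0.
by move: finf_le0; rewrite finf_eqy.
Qed.

Lemma lagD_xb_le (l : nat -> R) (li : R) : (forall k, (0 <= l k)%R) -> (0 <= li)%R ->
  lagD f0 f l li xb <= f0 xb.
Proof.
move=> l_ge0 li_ge0; rewrite /lagD.
apply: le_trans (gee_dual_addl _ _ (emulc_finf_xb_le0 _ li_ge0)) _; apply: gee_dual_addl.
by apply: le_trans (limn_esup_lagrange_xb_le _ 0 l_ge0) _; rewrite big_geq.
Qed.

Lemma lagD_xb_slack (l : nat -> R) (li : R) : (forall k, (0 <= l k)%R) -> (0 <= li)%R ->
  lagD f0 f l li xb = f0 xb ->
  (forall k, emulc (l k) (f k xb) = 0) /\ emulc li (finf f xb) = 0.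
Proof.
move=> l_ge0 li_ge0; rewrite /lagD -(fineK (fin_num_f0 f0_proper _ xb_dom)).
set F := fine (f0 xb); set A := limn_esup _; set B := emulc li _ => lag_eq.
have A_le0 : A <= 0 by apply: le_trans (limn_esup_lagrange_xb_le _ 0 l_ge0) _; rewrite big_geq.
have B_le0 : B <= 0 by exact: emulc_finf_xb_le0.
have FA_eq : dual_adde F%:E A = F%:E.
  apply/le_anti/andP; split; first exact: gee_dual_addl.
  by rewrite -[leLHS]lag_eq; exact: gee_dual_addl.
have A0 := dual_addeEFin_eq _ _ A_le0 FA_eq.
split; last by apply: (dual_addeEFin_eq F _ B_le0); rewrite -[RHS]lag_eq FA_eq.
move=> k; rewrite emulc_fin ?(fin_num_f f_proper _ _ xb_dom) //.
have sum0 : (\sum_(0 <= j < k.+1) l j * fine (f j xb) = 0)%R.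
  apply/le_anti/andP; split; first by apply: sumr_le0 => j _; exact: lagrange_term_xb_le0.
  by have := limn_esup_lagrange_xb_le _ k.+1 l_ge0; rewrite -/A A0 lee_fin.
by rewrite (nsumr_nat_eq0 _ _ _ sum0 _ (ltnSn k)) // => j; exact: lagrange_term_xb_le0.
Qed.

End weak_duality.

Lemma bounded_seq_cluster {R : realType} (u : R^nat) (a b : R) :
  (forall n, a <= u n <= b)%R -> exists2 c, (a <= c <= b)%R & cluster (u @ \oo) c.
Proof.
move=> u_ab.
have u_in : (u @ \oo) `[a, b]%classic by exists 0%N => // n _; rewrite /= in_itv /= u_ab.
have [c [c_ab c_cluster]] := @segment_compact R a b (u @ \oo) _ u_in.
by exists c => //; move: c_ab; rewrite /= in_itv.
Qed.

Section multiplier_bounds.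
Context {R : realType} {lam nu : nat -> R} {B : R}.
Hypotheses (lam_ge0 : forall k, (0 <= lam k)%R) (nu_ge0 : forall n, (0 <= nu n)%R).
Hypothesis mass_le : forall n, (\sum_(0 <= j < n) lam j + nu n <= B)%R.

Let partial_sum_ge0 n : (0 <= \sum_(0 <= j < n) lam j)%R.
Proof. by apply: sumr_ge0 => j _. Qed.

Lemma nu_le_bound n : (nu n <= B)%R.
Proof. by have := mass_le n; have := partial_sum_ge0 n; lra. Qed.

Lemma lam_le_bound k : (lam k <= B)%R.
Proof.
have := mass_le k.+1; rewrite big_nat_recr //=.
by have := partial_sum_ge0 k; have := nu_ge0 k.+1; lra.
Qed.

Lemma l1_plus_multipliers : l1_plus lam.
Proof.
split=> //; apply: le_lt_trans (ltry B); apply: lime_le.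
  by apply: is_cvg_nneseries => n _ _; rewrite lee_fin.
apply: nearW => n; rewrite sumEFin lee_fin.
by have := mass_le n; have := nu_ge0 n; lra.
Qed.

Lemma linf_plus_multipliers_Dm m : linf_plus (multipliers_Dm lam nu m).
Proof.
split=> [k | ]; first by rewrite /multipliers_Dm; case: ifP => _; rewrite ?lam_ge0 ?addr_ge0.
exists (B + 1)%R => k; rewrite /multipliers_Dm; case: ifP => _; last by rewrite lerD2r nu_le_bound.
by have := lam_le_bound k; lra.
Qed.

End multiplier_bounds.

Section strong_duality.
Context {R : realType} {X : Type} {f0 : X -> \bar R} {f : nat -> X -> \bar R} {xb : X}.
Hypotheses (f0_proper : proper_efun f0) (f_proper : forall k, proper_efun (f k)).
Hypothesis xb_feasible : feasible f0 f xb.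

Lemma solutionD_of_lower_bound (lam : nat -> R) (c : R) :
  l1_plus lam -> (0 <= c)%R -> (forall x, f0 xb <= lagD f0 f lam c x) ->
  ((exists lam li, solutionD f0 f lam li /\ f0 xb = dualD f0 f lam li) /\
   (forall lam li, solutionD f0 f lam li ->
      [/\ lagD f0 f lam li xb = dualD f0 f lam li,
          forall k, emulc (lam k) (f k xb) = 0
        & emulc li (finf f xb) = 0])).
Proof.
move=> lam_l1 c_ge0 lag_ge.
have dual_le l li : l1_plus l -> (0 <= li)%R -> dualD f0 f l li <= f0 xb.
  move=> [l_ge0 _] li_ge0; apply: (@le_trans _ _ (lagD f0 f l li xb)); last exact: lagD_xb_le.
  by apply: ereal_inf_lbound; exists xb.
have dual_eq : dualD f0 f lam c = f0 xb.
  apply/le_anti; rewrite dual_le //=.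
  by apply: le_ereal_inf_tmp => _ [x _ <-]; exact: lag_ge.
have val_eq : valD f0 f = f0 xb.
  apply/le_anti/andP; split.
    by apply: ge_ereal_sup => _ [l [li [l_l1 li_ge0 ->]]]; exact: dual_le.
  by apply: ereal_sup_ubound; exists lam, c; rewrite dual_eq.
split; first by exists lam, c; rewrite /solutionD dual_eq val_eq.
move=> l li [[l_ge0 l_sum] li_ge0 l_sol].
have lag_eq : lagD f0 f l li xb = f0 xb.
  apply/le_anti/andP; split; first exact: lagD_xb_le.
  by rewrite -val_eq -l_sol; apply: ereal_inf_lbound; exists xb.
have [slack_f slack_finf] : (forall k, emulc (l k) (f k xb) = 0) /\ emulc li (finf f xb) = 0.
  exact: lagD_xb_slack lag_eq.
by split; rewrite // lag_eq l_sol val_eq.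
Qed.

Lemma solutionDm_of_lower_bound m (lam : nat -> R) :
  linf_plus lam -> (forall x, f0 xb <= lagDm m f0 f lam x) ->
  (exists lam, solutionDm m f0 f lam /\ f0 xb = dualDm m f0 f lam) /\
  (forall lam, solutionDm m f0 f lam ->
     lagDm m f0 f lam xb = dualDm m f0 f lam /\
     forall k, (k < m)%N -> emulc (lam k) (f k xb) = 0).
Proof.
move=> lam_linf lag_ge.
have dual_le l : linf_plus l -> dualDm m f0 f l <= f0 xb.
  move=> [l_ge0 _]; apply: (@le_trans _ _ (lagDm m f0 f l xb)); last exact: lagDm_xb_le.
  by apply: ereal_inf_lbound; exists xb.
have dual_eq : dualDm m f0 f lam = f0 xb.
  apply/le_anti; rewrite dual_le //=.
  by apply: le_ereal_inf_tmp => _ [x _ <-]; exact: lag_ge.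
have val_eq : valDm m f0 f = f0 xb.
  apply/le_anti/andP; split; first by apply: ge_ereal_sup => _ [l [l_linf ->]]; exact: dual_le.
  by apply: ereal_sup_ubound; exists lam; rewrite dual_eq.
split; first by exists lam; rewrite /solutionDm dual_eq val_eq.
move=> l [[l_ge0 l_bd] l_sol].
have lag_eq : lagDm m f0 f l xb = f0 xb.
  apply/le_anti/andP; split; first exact: lagDm_xb_le.
  by rewrite -val_eq -l_sol; apply: ereal_inf_lbound; exists xb.
split; first by rewrite lag_eq l_sol val_eq.
exact: lagDm_xb_slack lag_eq.
Qed.

End strong_duality.

Theorem corollary3p5 (R : realType) (X : completeNormedModType R)
  (f0 : X -> \bar R) (f : nat -> X -> \bar R) (xb : X) :
  proper_efun f0 -> convex_efun f0 ->
  (forall k, proper_efun (f k)) -> (forall k, convex_efun (f k)) ->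
  feasible f0 f !=set0 ->
  solutionP f0 f xb ->
  (exists x, edom f0 x /\ ereal_sup (range (fun k => f k x)) < 0) ->
  ((exists lam li, solutionD f0 f lam li /\ f0 xb = dualD f0 f lam li) /\
   (forall lam li, solutionD f0 f lam li ->
      [/\ lagD f0 f lam li xb = dualD f0 f lam li,
          forall k, emulc (lam k) (f k xb) = 0
        & emulc li (finf f xb) = 0]))
  /\
  (forall m : nat,
    (exists lam, solutionDm m f0 f lam /\ f0 xb = dualDm m f0 f lam) /\
    (forall lam, solutionDm m f0 f lam ->
       lagDm m f0 f lam xb = dualDm m f0 f lam /\
       forall k, (k < m)%N -> emulc (lam k) (f k xb) = 0)).
Proof.
move=> f0_proper f0_convex f_proper f_convex _ [xb_feas xb_opt] [x0 [x0_dom x0_slater]].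
have f0xb_eq : f0 xb = (fine (f0 xb))%:E by rewrite fineK // fin_numElt xb_feas.1 ltNye f0_proper.1.
set p := fine (f0 xb) in f0xb_eq.
have p_le_f0 x : sup_dom f0 f x -> (forall k, f k x <= 0) -> (p <= fine (f0 x))%R.
  move=> dx x_feas; rewrite -lee_fin -f0xb_eq (fineK (fin_num_f0 f0_proper _ dx)).
  by apply: xb_opt; split; [exact: dx.1 | exact: x_feas].
have [lam [nu [lam_ge0 nu_ge0 nu_tail mass_le]]] :=
  lagrange_multipliers f0_proper f_proper f0_convex f_convex p_le_f0 x0_dom x0_slater.
split; last first.
  move=> m; apply: (solutionDm_of_lower_bound f0_proper f_proper xb_feas m _
    (linf_plus_multipliers_Dm lam_ge0 nu_ge0 mass_le m)).
  by move=> x; rewrite f0xb_eq; exact: lagDm_ge.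
have nu_range n : (0 <= nu n <= slater_bound f0 f p x0)%R.
  by rewrite nu_ge0 (nu_le_bound lam_ge0 mass_le).
have [c /andP[c_ge0 _] nu_cluster] := bounded_seq_cluster _ _ _ nu_range.
apply: (solutionD_of_lower_bound f0_proper f_proper xb_feas _ _
  (l1_plus_multipliers lam_ge0 nu_ge0 mass_le) c_ge0).
by move=> x; rewrite f0xb_eq; exact: (lagD_ge f0_proper f_proper nu_ge0 nu_tail c_ge0 nu_cluster).
Qed.
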